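(* Let $\lambda,\epsilon>0$ be constants with $\lambda+\epsilon<1$. Consider CVRP instances in an arbitrary metric space $(X,\delta)$, with a depot $O\in X$, a set $V\subseteq X$ of $n$ customers and capacity $k=k(n)$, where $k(n)\to\infty$ as $n\to\infty$. Then for all sufficiently large $n$ there exists a set $U\subseteq V$ with $|U|>(\lambda+\frac{\epsilon}{2})n$ such that $$\mathrm{OPT}\ \ge\ \mathrm{rad}+(1-\lambda-\epsilon)\sum_{x\in U}\delta\big(x,U\setminus\{x\}\big).$$
   Context: $\mathrm{OPT}$ is the minimum total cost of a collection of tours, each starting and ending at $O$ and visiting at most $k$ points of $V$, that together visit every point of $V$; the cost of a tour is the sum of $\delta$-distances between consecutive points. $\ell(x)=\delta(O,x)$ and $\mathrm{rad}=\frac{2}{k}\sum_{x\in V}\ell(x)$. For a point $x$ and a set $A$, $\delta(x,A)=\min_{a\in A}\delta(x,a)$ (with $\delta(x,\emptyset)=0$). *)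

From HB Require Import structures.
From mathcomp Require Import all_boot all_order all_algebra.
From mathcomp Require Import classical_sets reals.
Set Implicit Arguments. Unset Strict Implicit. Unset Printing Implicit Defensive.
Import Order.TTheory GRing.Theory Num.Theory.
Local Open Scope ring_scope.
Local Open Scope classical_set_scope.

Section CVRP.
Variables (R : realType) (X : Type) (d : X -> X -> R).

Definition is_metric : Prop :=
  (forall x y, 0 <= d x y) /\ (forall x, d x x = 0) /\
  (forall x y, d x y = 0 -> x = y) /\ (forall x y, d x y = d y x) /\
  (forall x y z, d x z <= d x y + d y z).

Fixpoint path_len (x : X) (s : seq X) : R :=
  match s with [::] => 0 | y :: s' => d x y + path_len y s' end.

Variables (n : nat) (O : X) (p : 'I_n -> X).
(* customers are p 0, ..., p (n-1) (p injective), V = image of p *)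

Definition tour_cost (t : seq 'I_n) : R := path_len O (rcons (map p t) O).

Definition feasible (k : nat) (T : seq (seq 'I_n)) : Prop :=
  (forall t, t \in T -> (size t <= k)%N) /\
  (forall i : 'I_n, exists2 t, t \in T & i \in t).

Definition sol_cost (T : seq (seq 'I_n)) : R := \sum_(t <- T) tour_cost t.

Definition OPT (k : nat) : R :=
  inf [set c | exists T, feasible k T /\ c = sol_cost T].

Definition cvrp_rad (k : nat) : R := 2 / k%:R * \sum_(i < n) d O (p i).

(* d(p i, {p j | j in A}) = min, with value 0 for the empty set *)
Definition dist_set (i : 'I_n) (A : {set 'I_n}) : R :=
  match [seq d (p i) (p j) | j <- enum A] with
  | [::] => 0
  | a :: s => foldr Num.min a s
  end.

End CVRP.

From mathcomp Require Import all_boot all_order all_algebra.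
From mathcomp Require Import classical_sets reals.
From mathcomp Require Import ring lra zify.
Import Order.TTheory GRing.Theory Num.Theory.
Local Open Scope ring_scope.

(* Write al = lam + 3 eps / 4 and c = 1 - lam - eps. Fix a feasible solution
   and make its tours disjoint by shortcutting repeated customers, which in a
   metric space does not increase the cost. Each tour t then pays for its
   share (2 / k) sum_{i in t} l(i) of rad together with c times the neighbour
   distances of the customers it contributes to U:
   - a small tour (at most (lam + eps) k customers) has share at most
     (lam + eps) cost(t), since every customer lies within cost(t) / 2 of O;
     its customers all join U (provided there are at least two of them in
     total), and their neighbour distances are paid by one closed tour
     through all of them, i.e. by the small tours altogether;
   - a large tour contributes its middle window W of about al |t| customers;
     the customers before and after W are close to O along the tour, which
     leaves a fraction 1 - |W| / k of the length of W to pay for the neighbour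
     distances along W, and these are at most that length plus its shortest
     edge.
   This gives |U| >= al n - 1 and rad + c sum_U d(x, U \ x) <= cost. There are
   finitely many U, so one of them works for the infimum OPT as well; finally
   k -> oo and n -> oo make the constants fit. *)

Set Implicit Arguments. Unset Strict Implicit.

Section MetricPaths.
Variables (R : realType) (X : Type) (d : X -> X -> R).
Hypothesis d_metric : is_metric d.

Lemma dist_ge0 x y : 0 <= d x y. Proof. by case: d_metric. Qed.
Lemma dist_xx x : d x x = 0. Proof. by case: d_metric => _ []. Qed.
Lemma dist_sym x y : d x y = d y x. Proof. by case: d_metric => _ [_ [_ []]]. Qed.
Lemma dist_triangle x y z : d x z <= d x y + d y z.
Proof. by case: d_metric => _ [_ [_ [_]]]. Qed.

Lemma path_len_ge0 x s : 0 <= path_len d x s.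
Proof. by elim: s x => [|y s IH] x //=; rewrite addr_ge0 ?dist_ge0. Qed.

Lemma path_len_cat x s1 s2 :
  path_len d x (s1 ++ s2) = path_len d x s1 + path_len d (last x s1) s2.
Proof. by elim: s1 x => [|y s IH] x /=; rewrite ?add0r // IH addrA. Qed.

Lemma path_len_rcons x s z :
  path_len d x (rcons s z) = path_len d x s + d (last x s) z.
Proof. by rewrite -cats1 path_len_cat /= addr0. Qed.

Lemma path_len_restart x a s : path_len d x s <= d x a + path_len d a s.
Proof.
case: s => [|y s] /=; first by rewrite addr0 dist_ge0.
by rewrite addrA lerD2r dist_triangle.
Qed.

Lemma path_len_redirect x s y z :
  path_len d x (rcons s z) <= path_len d x (rcons s y) + d y z.
Proof. by rewrite !path_len_rcons -addrA lerD2l dist_triangle. Qed.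

Lemma dist_last_le_path_len x s : d x (last x s) <= path_len d x s.
Proof.
elim: s x => [|y s IH] x /=; first by rewrite dist_xx.
by apply: le_trans (dist_triangle x y _) _; rewrite lerD2l IH.
Qed.

Lemma path_len_through x s1 z s2 :
  d x z + d z (last z s2) <= path_len d x (s1 ++ z :: s2).
Proof.
rewrite path_len_cat /= addrA lerD ?dist_last_le_path_len //.
apply: le_trans (dist_triangle x (last x s1) z) _.
by rewrite lerD2r dist_last_le_path_len.
Qed.

Lemma dist_le_path_len x s1 z s2 : d x z <= path_len d x (s1 ++ z :: s2).
Proof. by apply: le_trans (path_len_through _ _ _ _); rewrite lerDl dist_ge0. Qed.

Lemma dist_to_last_le_path_len x s1 z s2 :
  d z (last z s2) <= path_len d x (s1 ++ z :: s2).
Proof. by apply: le_trans (path_len_through _ _ _ _); rewrite lerDr dist_ge0. Qed.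

Lemma path_len_mask x s m y :
  path_len d x (rcons (mask m s) y) <= path_len d x (rcons s y).
Proof.
elim: s x m => [|a s IH] x [|[] m] //=.
- rewrite addr0; have := dist_last_le_path_len x (a :: rcons s y).
  by rewrite /= last_rcons.
- by rewrite lerD2l IH.
- by apply: le_trans (path_len_restart x a _) _; rewrite lerD2l IH.
Qed.

End MetricPaths.

Lemma sum_le_size_mul (R : numDomainType) (I : eqType) (s : seq I) (F : I -> R) a :
  (forall i, i \in s -> F i <= a) -> \sum_(i <- s) F i <= (size s)%:R * a.
Proof.
elim: s => [|x s IH] h; first by rewrite big_nil mul0r.
rewrite big_cons /= -addn1 natrD mulrDl mul1r addrC lerD ?h ?mem_head //.
by apply: IH => i hi; rewrite h // inE hi orbT.
Qed.

Lemma foldr_min_le (R : realDomainType) (a : R) s x :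
  x \in a :: s -> foldr Num.min a s <= x.
Proof.
elim: s x => [|b s IH] x /=; first by rewrite inE => /eqP ->.
rewrite !inE => /or3P [/eqP ->|/eqP ->|hx].
- by rewrite ge_min (IH a (mem_head _ _)) orbT.
- by rewrite ge_min lexx.
- by rewrite ge_min (IH x) ?inE ?hx ?orbT.
Qed.

Section Tours.
Variables (R : realType) (X : Type) (d : X -> X -> R).
Hypothesis d_metric : is_metric d.
Variables (n : nat) (O : X) (p : 'I_n -> X).

Lemma tour_cost_ge0 t : 0 <= tour_cost d O p t.
Proof. exact: path_len_ge0. Qed.

Lemma tour_cost_round_trip (i : 'I_n) t :
  i \in t -> 2 * d O (p i) <= tour_cost d O p t.
Proof.
case/splitPr => t1 t2; rewrite /tour_cost map_cat rcons_cat /=.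
have := path_len_through d_metric O (map p t1) (p i) (rcons (map p t2) O).
by rewrite last_rcons (dist_sym d_metric (p i)) mulr_natl mulr2n.
Qed.

Lemma tour_cost_mask m t : tour_cost d O p (mask m t) <= tour_cost d O p t.
Proof. by rewrite /tour_cost map_mask path_len_mask. Qed.

Lemma tour_concat_le ts :
  path_len d O (rcons (map p (flatten ts)) O) <= \sum_(t <- ts) tour_cost d O p t.
Proof.
elim: ts => [|t ts IH] /=; first by rewrite big_nil /= dist_xx // addr0.
rewrite big_cons map_cat rcons_cat path_len_cat.
rewrite {1}/tour_cost (path_len_rcons _ _ (map p t)) -addrA lerD2l.
by apply: le_trans (path_len_restart d_metric _ O _) _; rewrite lerD2l.
Qed.

Lemma dist_set_le (i j : 'I_n) (A : {set 'I_n}) :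
  j \in A -> dist_set d p i A <= d (p i) (p j).
Proof.
move=> hj; rewrite /dist_set.
have : d (p i) (p j) \in [seq d (p i) (p j0) | j0 <- enum A].
  by apply: map_f; rewrite mem_enum.
by case: [seq _ | _ <- _] => [|a s] //; apply: foldr_min_le.
Qed.

(* A path with [s] edges has an edge of length at most its average; we split
   the path at such an edge, the "gap" [last a1 l1 -> a2]. *)
Lemma short_edge_split w W : W != [::] -> exists a1 l1 a2 l2,
  w :: W = (a1 :: l1) ++ (a2 :: l2) /\
  (size W)%:R * d (p (last a1 l1)) (p a2) <= path_len d (p w) (map p W).
Proof.
elim: W w => [|a W IH] w // _.
case: W IH => [|b W] IH; first by exists w, [::], a, [::]; rewrite /= addr0 mul1r.
have [a1 [l1 [a2 [l2 [E hgap]]]]] := IH a isT.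
set s := size (b :: W) in hgap *; set P := path_len _ _ _ in hgap *.
have hP : path_len d (p w) (map p [:: a, b & W]) = d (p w) (p a) + P by [].
have hs : (size [:: a, b & W])%:R = s%:R + 1 :> R by rewrite /s /= -addn1 natrD.
rewrite hP hs; case: (leP ((s%:R + 1) * d (p w) (p a)) (d (p w) (p a) + P)) => hfirst.
  by exists w, [::], a, (b :: W).
exists w, (a1 :: l1), a2, l2; split; first by rewrite E.
have s_gt0 : 0 < s%:R :> R by rewrite ltr0n.
have := dist_ge0 d_metric (p (last a1 l1)) (p a2); nra.
Qed.

End Tours.

Section NeighbourSums.
Variables (R : realType) (X : Type) (d : X -> X -> R).
Hypothesis d_metric : is_metric d.
Variables (n : nat) (p : 'I_n -> X) (U : {set 'I_n}).

Let nbr i := dist_set d p i (U :\ i).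
Let step : rel 'I_n := fun i j => [&& i \in U, j \in U & i != j].

Lemma nbr_le_step i j : step i j -> nbr i <= d (p i) (p j).
Proof. by case/and3P => hi hj hij; apply: dist_set_le; rewrite !inE eq_sym hij. Qed.

(* Charging each point of a path to the edge leaving it... *)
Lemma nbr_sum_forward a l b : path step a (rcons l b) ->
  \sum_(i <- a :: l) nbr i <= path_len d (p a) (map p (rcons l b)).
Proof.
elim: l a => [|a' l IH] a /=.
  by rewrite big_cons big_nil !addr0 andbT; apply: nbr_le_step.
by case/andP => h1 h2; rewrite big_cons lerD ?nbr_le_step // IH.
Qed.

(* ... or to the edge entering it. *)
Lemma nbr_sum_backward b l : path step b l ->
  \sum_(i <- l) nbr i <= path_len d (p b) (map p l).
Proof.
elim: l b => [|a l IH] b /=; first by rewrite big_nil.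
case/andP => /and3P [hb ha hba] h2; rewrite big_cons lerD ?IH //.
by rewrite dist_sym //; apply: nbr_le_step; rewrite /step ha hb eq_sym.
Qed.

Lemma uniq_step_path x s : uniq (x :: s) -> all (mem U) (x :: s) -> path step x s.
Proof.
elim: s x => [|y s IH] x //=.
rewrite !inE negb_or => /andP [/andP [hxy _]] /andP [hys us] /and3P [hx hy hs].
by rewrite /step hx hy hxy /= IH //= ?hys ?us ?hy.
Qed.

(* Along a path with [s] edges inside [U], the neighbour distances of its
   [s + 1] points are paid by the path plus one edge [g] with [s g <= length]:
   points before the gap are charged forward, points after it backward. *)
Lemma nbr_sum_path w W : W != [::] -> path step w W ->
  exists g, [/\ 0 <= g, (size W)%:R * g <= path_len d (p w) (map p W) &
    \sum_(i <- w :: W) nbr i <= path_len d (p w) (map p W) + g].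
Proof.
move=> W_ne hpath.
have [a1 [l1 [a2 [l2 [E hgap]]]]] := short_edge_split d_metric p w W_ne.
exists (d (p (last a1 l1)) (p a2)); split; rewrite ?dist_ge0 //.
case: E hpath => -> ->; rewrite cat_path => /andP [h1 h2].
have hfwd : path step a1 (rcons l1 a2) by rewrite rcons_path h1; case/andP: h2.
rewrite -cat_cons big_cat /=.
apply: le_trans (lerD (nbr_sum_forward hfwd) (nbr_sum_backward h2)) _.
by rewrite map_cat path_len_cat map_rcons path_len_rcons last_map addrAC.
Qed.

Lemma nbr_sum_cycle (O : X) (L : seq 'I_n) :
  (1 < size L)%N -> uniq L -> all (mem U) L ->
  \sum_(i <- L) nbr i <= path_len d O (rcons (map p L) O).
Proof.
case: L => [|a [|a' l]] // _ uL allU.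
have hl : last a' l \in a' :: l by apply: mem_last.
have lastU : last a' l \in U by apply: (allP allU); rewrite inE hl orbT.
have aU : a \in U by apply: (allP allU); rewrite mem_head.
have hcycle : path step a (rcons (a' :: l) a).
  rewrite rcons_path uniq_step_path //= /step lastU aU /=.
  by apply/eqP => ha; move: uL; rewrite /= -ha hl.
apply: le_trans (nbr_sum_forward hcycle) _.
rewrite map_rcons; apply: le_trans (path_len_redirect d_metric _ _ O _) _.
by rewrite addrC.
Qed.

End NeighbourSums.

(* Arithmetic core of [rad_share_window]: [x], [sp], [y] are the lengths of
   the part of a tour before, inside and after a window; the [q] customers on
   either side pay at most [x] resp. [y] each, the [r] customers of the window
   at most half the tour each, and [2 q + r <= K]. *)
Lemma window_share_arith (R : realFieldType) (K q r x y sp SA SW SB : R) :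
  0 < K -> 0 <= q -> 0 <= x -> 0 <= y -> 0 <= sp -> 2 * q + r <= K ->
  SA <= q * x -> SB <= q * y -> SW <= r * ((x + sp + y) / 2) ->
  (1 - r / K) * sp <= (x + sp + y) - 2 / K * (SA + SW + SB).
Proof.
move=> K0 q0 x0 y0 sp0 hK hA hB hW.
have h1 : 2 / K * (SA + SW + SB) <= 2 / K * (q * x + r * ((x + sp + y) / 2) + q * y).
  by rewrite ler_wpM2l ?divr_ge0 ?(ltW K0) //; lra.
have h2 : 0 <= K^-1 * ((K - 2 * q - r) * (x + y)).
  by rewrite mulr_ge0 ?invr_ge0 ?(ltW K0) // mulr_ge0 //; lra.
apply: le_trans _ (lerB (lexx _) h1); rewrite -subr_ge0.
suff -> : x + sp + y - 2 / K * (q * x + r * ((x + sp + y) / 2) + q * y)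
          - (1 - r / K) * sp = K^-1 * ((K - 2 * q - r) * (x + y)) by [].
by field; rewrite gt_eqF.
Qed.

Section RadShares.
Variables (R : realType) (X : Type) (d : X -> X -> R).
Hypothesis d_metric : is_metric d.
Variables (n : nat) (O : X) (p : 'I_n -> X).

Lemma rad_share_le (k : nat) t :
  2 / k%:R * \sum_(i <- t) d O (p i) <= (size t)%:R / k%:R * tour_cost d O p t.
Proof.
have half i : i \in t -> d O (p i) <= tour_cost d O p t / 2.
  by move/(tour_cost_round_trip d_metric O p); lra.
have := sum_le_size_mul half; rewrite mulrA => hsum.
rewrite [2 / _]mulrC [_ / k%:R]mulrC -!mulrA ler_wpM2l ?invr_ge0 ?ler0n //; lra.
Qed.

(* For a tour [A ++ W ++ B] with [size A = size B = q] and [2 q + size W <= k],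
   the customers of [A] and [B] are close to the depot along the tour, so their
   share of [rad] leaves a fraction [1 - size W / k] of the window's length. *)
Lemma rad_share_window (k : nat) t A w W B :
  t = A ++ w :: W ++ B -> size A = size B ->
  (2 * size A + (size W).+1 <= k)%N -> (0 < k)%N ->
  (1 - (size W).+1%:R / k%:R) * path_len d (p w) (map p W)
    <= tour_cost d O p t - 2 / k%:R * \sum_(i <- t) d O (p i).
Proof.
move=> -> hAB hk k_gt0.
have hA i : i \in A -> d O (p i) <= path_len d O (rcons (map p A) (p w)).
  by case/splitPr => A1 A2; rewrite map_cat rcons_cat /= dist_le_path_len.
have hB i : i \in B -> d O (p i) <= path_len d (p (last w W)) (rcons (map p B) O).
  case/splitPr => B1 B2; rewrite map_cat rcons_cat /= dist_sym //.
  by have := dist_to_last_le_path_len d_metric (p (last w W)) (map p B1) (p i)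
    (rcons (map p B2) O); rewrite last_rcons.
have hW i : i \in w :: W -> d O (p i) <= tour_cost d O p (A ++ w :: W ++ B) / 2.
  move=> hi; have := @tour_cost_round_trip _ _ _ d_metric _ O p i (A ++ w :: W ++ B).
  by rewrite -cat_cons catA !mem_cat hi orbT /=; lra.
set x := path_len d O (rcons (map p A) (p w)) in hA *.
set sp := path_len d (p w) (map p W).
set y := path_len d (p (last w W)) (rcons (map p B) O) in hB *.
have hcost : tour_cost d O p (A ++ w :: W ++ B) = x + sp + y.
  rewrite /tour_cost map_cat rcons_cat /= map_cat rcons_cat path_len_cat /=.
  by rewrite path_len_cat /x /sp /y !path_len_rcons last_map; lra.
rewrite hcost in hW.
rewrite hcost -cat_cons !big_cat /= addrA.
apply: (@window_share_arith _ _ (size A)%:R) => //;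
  rewrite ?path_len_ge0 ?ltr0n ?ler0n //.
- by rewrite -natrM -natrD ler_nat.
- exact: sum_le_size_mul.
- by rewrite hAB; apply: sum_le_size_mul.
- exact: sum_le_size_mul.
Qed.

End RadShares.

Fixpoint disjoint_tours n (seen : seq 'I_n) (T : seq (seq 'I_n)) : seq (seq 'I_n) :=
  if T is t :: T' then
    let t' := undup [seq i <- t | i \notin seen] in t' :: disjoint_tours (seen ++ t') T'
  else [::].

Lemma disjoint_tour_subseq n (seen : seq 'I_n) t :
  subseq (undup [seq i <- t | i \notin seen]) t.
Proof. exact: subseq_trans (undup_subseq _) (filter_subseq _ _). Qed.

Lemma disjoint_tours_uniq n T (seen : seq 'I_n) :
  uniq seen -> uniq (seen ++ flatten (disjoint_tours seen T)).
Proof.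
elim: T seen => [|t T IH] seen /= useen; first by rewrite cats0.
rewrite catA; apply: IH; rewrite cat_uniq useen undup_uniq andbT /=.
by apply/hasPn => i; rewrite mem_undup mem_filter; case/andP.
Qed.

Lemma disjoint_tours_cover n T (seen : seq 'I_n) :
  {subset flatten T <= seen ++ flatten (disjoint_tours seen T)}.
Proof.
elim: T seen => [|t T IH] seen /= i //.
rewrite mem_cat => /orP [hi|hi]; last first.
  by have := IH (seen ++ undup [seq j <- t | j \notin seen]) i hi; rewrite -catA.
case hs: (i \in seen); first by rewrite mem_cat hs.
by rewrite mem_cat /= mem_cat mem_undup mem_filter hs hi orbT.
Qed.

Lemma disjoint_tours_size n T (seen : seq 'I_n) k :
  (forall t, t \in T -> (size t <= k)%N) ->
  forall t, t \in disjoint_tours seen T -> (size t <= k)%N.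
Proof.
elim: T seen => [|t T IH] seen //= hT t'; rewrite inE => /orP [/eqP ->|ht'].
  by apply: leq_trans (size_subseq (disjoint_tour_subseq seen t)) (hT _ (mem_head _ _)).
by apply: (IH _ _ t' ht') => t0 ht0; rewrite hT // inE ht0 orbT.
Qed.

Lemma disjoint_tours_cost (R : realType) (X : Type) (d : X -> X -> R) n O
    (p : 'I_n -> X) T seen : is_metric d ->
  \sum_(t <- disjoint_tours seen T) tour_cost d O p t <= \sum_(t <- T) tour_cost d O p t.
Proof.
move=> d_metric; elim: T seen => [|t T IH] seen /=; first by rewrite !big_nil.
rewrite !big_cons lerD //.
by have /subseqP [m _ ->] := disjoint_tour_subseq seen t; apply: tour_cost_mask.
Qed.

Lemma flatten_map_subseq (T : eqType) (Ts : seq (seq T)) f :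
  (forall t, subseq (f t) t) -> subseq (flatten (map f Ts)) (flatten Ts).
Proof. by move=> hf; elim: Ts => [|t Ts IH] //=; apply: cat_subseq. Qed.

Lemma flatten_filter_subseq (T : eqType) (Ts : seq (seq T)) P :
  subseq (flatten (filter P Ts)) (flatten Ts).
Proof.
elim: Ts => [|t Ts IH] //=; case: (P t) => /=; first exact: cat_subseq.
by apply: subseq_trans IH _; apply: suffix_subseq.
Qed.

Lemma uniq_flatten_mem (T : eqType) (s : seq (seq T)) t :
  uniq (flatten s) -> t \in s -> uniq t.
Proof.
elim: s => [|a s IH] //=; rewrite cat_uniq inE => /and3P [ua _ us].
by case/orP => [/eqP ->|/IH]; last apply.
Qed.

Lemma natr_size_flatten (R : pzSemiRingType) (T : Type) (s : seq (seq T)) :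
  (size (flatten s))%:R = \sum_(t <- s) (size t)%:R :> R.
Proof. by rewrite size_flatten sumnE natr_sum big_map. Qed.

Definition margin (R : archiFieldType) (al : R) (m : nat) : nat :=
  Num.truncn ((1 - al) * m%:R / 2).

Definition middle_window (R : archiFieldType) (al : R) (T : Type) (t : seq T) :=
  take (size t - 2 * margin al (size t)) (drop (margin al (size t)) t).

Lemma middle_window_subseq (R : archiFieldType) (al : R) (T : eqType) (t : seq T) :
  subseq (middle_window al t) t.
Proof. exact: subseq_trans (take_subseq _ _) (drop_subseq _ _). Qed.

Lemma middle_window_spec (R : archiFieldType) (al : R) (T : Type) (t : seq T) :
  0 <= al <= 1 ->
  let q := margin al (size t) in let W := middle_window al t in
  [/\ t = take q t ++ W ++ drop (size W) (drop q t),
      size (take q t) = q, size (drop (size W) (drop q t)) = q,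
      (2 * q + size W)%N = size t &
      al * (size t)%:R <= (size W)%:R < al * (size t)%:R + 2].
Proof.
case/andP=> al0 al1 q W; set m := size t.
have hx0 : 0 <= (1 - al) * m%:R / 2 by rewrite divr_ge0 // mulr_ge0 // subr_ge0.
have hq1 : q%:R <= (1 - al) * m%:R / 2 by rewrite /q /margin truncn_le.
have hq2 : (1 - al) * m%:R / 2 < q.+1%:R by rewrite /q /margin truncnS_gt.
have h2q : (2 * q <= m)%N.
  rewrite -(ler_nat R) natrM.
  have : (1 - al) * m%:R <= m%:R by rewrite ler_piMl // lerBlDr lerDl.
  lra.
have sizeW : size W = (m - 2 * q)%N.
  by rewrite /W /middle_window size_takel // size_drop leq_sub2l // leq_pmull.
have hr : (size W)%:R = m%:R - 2 * q%:R :> R by rewrite sizeW natrB // natrM.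
split.
- by rewrite sizeW /W /middle_window -/m -/q !cat_take_drop.
- by rewrite size_takel //; lia.
- by rewrite !size_drop sizeW; lia.
- by rewrite sizeW; lia.
- by rewrite hr; apply/andP; split; move: hq2; rewrite [q.+1%:R]mulrS; lra.
Qed.

Lemma window_size_arith (R : realFieldType) (lam eps K m r : R) :
  0 < lam -> 0 < eps -> lam + eps < 1 -> 0 < K -> m <= K -> (lam + eps) * K < m ->
  (lam + 3 * eps / 4) * m <= r -> r < (lam + 3 * eps / 4) * m + 2 ->
  16 / eps <= K -> 16 / eps <= (lam + 3 * eps / 4) * (lam + eps) * K ->
  (1 - lam - eps) * r <= (r - 1) * (1 - r / K).
Proof.
move=> lam0 eps0 lam_eps1 K0 mK hm hr1 hr2 hK hK2.
set al := lam + 3 * eps / 4 in hr1 hr2 hK2.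
have al0 : 0 < al by rewrite /al; lra.
have h16 : 16 <= K * eps by rewrite -ler_pdivrMr.
have hrK : r / K <= al + 2 / K.
  rewrite ler_pdivrMr // mulrDl divfK ?gt_eqF //.
  have : al * m <= al * K by rewrite ler_pM2l.
  lra.
have h2K : 2 / K <= eps / 8 by rewrite ler_pdivrMr //; lra.
have hr3 : 16 <= eps * (r - 1) + eps.
  have h16' : 16 <= (al * (lam + eps) * K) * eps by rewrite -ler_pdivrMr.
  have : al * ((lam + eps) * K) <= al * m by rewrite ler_pM2l // ltW.
  rewrite mulrA => h; nra.
have hz : 1 - lam - eps + eps / 8 <= 1 - r / K by rewrite /al in hrK; lra.
have r1 : 0 <= r - 1 by nra.
apply: le_trans (_ : (r - 1) * (1 - lam - eps + eps / 8) <= _); last first.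
  by rewrite ler_wpM2l.
nra.
Qed.

Lemma window_charge_arith (R : realFieldType) (c z sp g s D G : R) :
  0 <= c -> 0 < s -> 0 <= g -> 0 <= sp -> s * g <= sp -> D <= sp + g ->
  c * (s + 1) <= s * z -> z * sp <= G -> c * D <= G.
Proof.
move=> c0 s0 g0 sp0 hsg hD hc hz.
apply: le_trans (_ : c * (sp + g) <= _); first by rewrite ler_wpM2l.
rewrite -(ler_pM2l s0).
have h2 : c * (s * g) <= c * sp by rewrite ler_wpM2l.
have h3 : c * (s + 1) * sp <= s * z * sp by rewrite ler_wpM2r.
have h4 : s * z * sp <= s * G by rewrite -mulrA ler_wpM2l // ltW.
have -> : s * (c * (sp + g)) = c * (s + 1) * sp + (c * (s * g) - c * sp) by ring.
lra.
Qed.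

Section Charging.
Variables (R : realType) (X : Type) (d : X -> X -> R).
Hypothesis d_metric : is_metric d.
Variables (n : nat) (O : X) (p : 'I_n -> X) (lam eps : R) (k : nat).
Hypotheses (lam_gt0 : 0 < lam) (eps_gt0 : 0 < eps) (lam_eps_lt1 : lam + eps < 1).
Hypotheses (k_large : 16 / eps <= k%:R)
  (k_large_al : 16 / eps <= (lam + 3 * eps / 4) * (lam + eps) * k%:R).

(* Fraction of each large tour kept in [U]. *)
Let al := lam + 3 * eps / 4.

Lemma al_bounds : 0 < al < 1.
Proof.
move: (lam_gt0) (eps_gt0) (lam_eps_lt1); rewrite /al => *.
by apply/andP; split; lra.
Qed.

Lemma capacity_gt0 : 0 < k%:R :> R.
Proof. by apply: lt_le_trans k_large; rewrite divr_gt0. Qed.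

Lemma large_tour_bound (U : {set 'I_n}) t :
  (size t <= k)%N -> (lam + eps) * k%:R < (size t)%:R ->
  uniq (middle_window al t) -> all (mem U) (middle_window al t) ->
  (1 - lam - eps) * \sum_(i <- middle_window al t) dist_set d p i (U :\ i)
    <= tour_cost d O p t - 2 / k%:R * \sum_(i <- t) d O (p i).
Proof.
move=> size_le size_gt uW allW; have /andP [al0 al1] := al_bounds.
have k0 := capacity_gt0.
have k_gt0 : (0 < k)%N by rewrite -(ltr0n R).
have [] := @middle_window_spec _ al _ t; first by rewrite !ltW.
move=> ht hA hB hsum /andP [hr1 hr2].
have r_ge16 : 16 <= (size (middle_window al t))%:R :> R.
  have : al * ((lam + eps) * k%:R) <= al * (size t)%:R by rewrite ler_pM2l // ltW.
  have : 16 <= 16 / eps by rewrite ler_pdivlMr //; move: (lam_gt0) (lam_eps_lt1); lra.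
  by move: (k_large_al); rewrite -/al mulrA; lra.
move: uW allW ht hA hB hsum hr1 hr2 r_ge16.
case: (middle_window al t) => [|w W] uW allW ht hA hB hsum hr1 hr2 r_ge16.
  by move: r_ge16; rewrite ler_nat.
have W_ne : W != [::] by apply: contraTneq r_ge16 => ->; rewrite ler_nat.
have [g [g0 hg hnbr]] := nbr_sum_path d_metric p W_ne (uniq_step_path uW allW).
have hAB : size (take (margin al (size t)) t) =
    size (drop (size (w :: W)) (drop (margin al (size t)) t)) by rewrite hA hB.
have hk : (2 * size (take (margin al (size t)) t) + (size W).+1 <= k)%N.
  by rewrite hA; move: hsum => /= ->.
have hshare := rad_share_window d_metric O p ht hAB hk k_gt0.
have mk : (size t)%:R <= k%:R :> R by rewrite ler_nat.
have hsize : (1 - lam - eps) * ((size W)%:R + 1)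
    <= (size W)%:R * (1 - (size W).+1%:R / k%:R).
  have := window_size_arith lam_gt0 eps_gt0 lam_eps_lt1 k0 mk size_gt hr1 hr2
    k_large k_large_al.
  by rewrite mulrSr addrK.
apply: (window_charge_arith _ _ g0 (path_len_ge0 d_metric _ _) hg hnbr hsize hshare).
- by move: (lam_eps_lt1); lra.
- by rewrite ltr0n lt0n size_eq0.
Qed.

Variable Ts : seq (seq 'I_n).
Hypotheses (Ts_uniq : uniq (flatten Ts)) (Ts_cover : forall i, i \in flatten Ts)
  (Ts_size : forall t, t \in Ts -> (size t <= k)%N).

Let small (t : seq 'I_n) : bool := (size t)%:R <= (lam + eps) * k%:R.
Let small_customers := flatten [seq t <- Ts | small t].
Let keep_small := (1 < size small_customers)%N.
Let selected t := if small t then (if keep_small then t else [::])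
                  else middle_window al t.
Let selection := flatten [seq selected t | t <- Ts].
Let U := [set i in selection].
Let nbr i := dist_set d p i (U :\ i).

Lemma selected_subseq t : subseq (selected t) t.
Proof.
rewrite /selected; case: ifP => _; last exact: middle_window_subseq.
by case: ifP => _; rewrite ?subseq_refl ?sub0seq.
Qed.

Lemma selection_uniq : uniq selection.
Proof. exact: subseq_uniq (flatten_map_subseq Ts selected_subseq) Ts_uniq. Qed.

Lemma selected_in_U t i : t \in Ts -> i \in selected t -> i \in U.
Proof. by move=> ht hi; rewrite inE; apply/flatten_mapP; exists t. Qed.

Lemma tour_uniq t : t \in Ts -> uniq t.
Proof. exact: uniq_flatten_mem Ts_uniq. Qed.

Lemma sum_nbr_U : \sum_(i in U) nbr i = \sum_(t <- Ts) \sum_(i <- selected t) nbr i.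
Proof.
transitivity (\sum_(i in selection) nbr i); first by apply: eq_bigl => i; rewrite inE.
by rewrite -big_uniq ?selection_uniq // big_flatten big_map.
Qed.

Lemma n_eq_sum_sizes : n%:R = \sum_(t <- Ts) (size t)%:R :> R.
Proof.
rewrite -natr_size_flatten; congr (_%:R).
by rewrite -(card_uniqP Ts_uniq) -[LHS]card_ord; apply: eq_card => i; rewrite Ts_cover.
Qed.

Lemma rad_split : cvrp_rad d O p k = \sum_(t <- Ts) 2 / k%:R * \sum_(i <- t) d O (p i).
Proof.
rewrite /cvrp_rad -mulr_sumr -big_flatten /=; congr (_ * _).
by rewrite [RHS]big_uniq //; apply: eq_bigl => i; rewrite Ts_cover.
Qed.

(* Every tour keeps a fraction [al] of its customers, except the customers of
   small tours when they are dropped, and then there is at most one of those. *)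
Lemma card_U : al * n%:R - 1 <= #|U|%:R.
Proof.
have /andP [al0 al1] := al_bounds.
have -> : #|U| = size selection by rewrite cardsE; apply/card_uniqP/selection_uniq.
rewrite natr_size_flatten big_map n_eq_sum_sizes mulr_sumr.
pose dropped (t : seq 'I_n) : R := if small t && ~~ keep_small then (size t)%:R else 0.
have per_tour t : t \in Ts -> al * (size t)%:R <= (size (selected t))%:R + dropped t.
  move=> ht; rewrite /dropped /selected; case: ifP => hs /=.
    by case: ifP => _ /=; rewrite ?addr0 ?add0r ler_piMl // ltW.
  have [] := @middle_window_spec _ al _ t; first by rewrite !ltW.
  by move=> _ _ _ _ /andP [h _]; rewrite addr0.
have dropped_le1 : \sum_(t <- Ts) dropped t <= 1.
  rewrite /dropped; case hkeep: keep_small => /=.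
    by rewrite big1 ?ler01 // => t _; rewrite andbF.
  under eq_bigr => t _ do rewrite andbT.
  rewrite -big_mkcond /= -big_filter -natr_size_flatten -/small_customers.
  by rewrite lern1 leqNgt; move: hkeep; rewrite /keep_small => ->.
have : \sum_(t <- Ts) al * (size t)%:R
       <= \sum_(t <- Ts) ((size (selected t))%:R + dropped t).
  by rewrite big_seq [X in _ <= X]big_seq; apply: ler_sum => t; apply: per_tour.
rewrite big_split /=; lra.
Qed.

Let rad_part t := 2 / k%:R * \sum_(i <- t) d O (p i).
Let nbr_part t := \sum_(i <- selected t) nbr i.

Lemma large_tours_pay :
  \sum_(t <- Ts | ~~ small t) (rad_part t + (1 - lam - eps) * nbr_part t)
    <= \sum_(t <- Ts | ~~ small t) tour_cost d O p t.
Proof.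
rewrite big_seq_cond [X in _ <= X]big_seq_cond; apply: ler_sum => t /andP [ht hs].
have hW : all (mem U) (middle_window al t).
  by apply/allP => i hi; apply: (selected_in_U ht); rewrite /selected (negbTE hs).
have := large_tour_bound (Ts_size ht) _ _ hW; rewrite ltNge hs => /(_ isT).
rewrite (subseq_uniq (middle_window_subseq _ _) (tour_uniq ht)) => /(_ isT).
by rewrite /rad_part /nbr_part /selected (negbTE hs); lra.
Qed.

(* The neighbour distances of the customers of small tours are paid by a
   single closed tour through all of them, hence by the small tours. *)
Lemma small_nbr_le :
  \sum_(t <- Ts | small t) nbr_part t <= \sum_(t <- Ts | small t) tour_cost d O p t.
Proof.
rewrite /nbr_part /selected; case hkeep: keep_small; last first.
  rewrite big1 => [|t hs]; last by rewrite hs big_nil.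
  by apply: sumr_ge0 => t _; apply: tour_cost_ge0.
rewrite -big_filter -[X in _ <= X]big_filter.
rewrite (eq_big_seq (fun t => \sum_(i <- t) nbr i)); last first.
  by move=> t; rewrite mem_filter => /andP [hs _]; rewrite hs.
rewrite -big_flatten /= -/small_customers.
apply: le_trans (tour_concat_le d_metric O p _).
apply: nbr_sum_cycle => //.
- exact: subseq_uniq (flatten_filter_subseq Ts small) Ts_uniq.
- apply/allP => i /flattenP [t]; rewrite mem_filter => /andP [hs ht] hi.
  by apply: (selected_in_U ht); rewrite /selected hs hkeep.
Qed.

(* Small tours pay for themselves: their [rad] share is at most a fraction
   [lam + eps] of their cost. *)
Lemma small_tours_pay :
  \sum_(t <- Ts | small t) (rad_part t + (1 - lam - eps) * nbr_part t)
    <= \sum_(t <- Ts | small t) tour_cost d O p t.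
Proof.
have k0 := capacity_gt0.
have rad_le : \sum_(t <- Ts | small t) rad_part t
              <= (lam + eps) * \sum_(t <- Ts | small t) tour_cost d O p t.
  rewrite mulr_sumr; apply: ler_sum => t hs.
  apply: le_trans (rad_share_le d_metric O p k t) _.
  by rewrite ler_wpM2r ?(tour_cost_ge0 d_metric) // ler_pdivrMr // mulrC.
have c0 : 0 <= 1 - lam - eps by move: (lam_eps_lt1); lra.
have := ler_wpM2l c0 small_nbr_le; rewrite big_split /= mulr_sumr; lra.
Qed.

Lemma charging_bound : exists U : {set 'I_n},
  al * n%:R - 1 <= #|U|%:R /\
  cvrp_rad d O p k + (1 - lam - eps) * \sum_(i in U) dist_set d p i (U :\ i)
    <= \sum_(t <- Ts) tour_cost d O p t.
Proof.
exists U; split; first exact: card_U.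
rewrite rad_split sum_nbr_U mulr_sumr -big_split /=.
rewrite (bigID small) [X in _ <= X](bigID small) /=.
exact: lerD small_tours_pay large_tours_pay.
Qed.

End Charging.

Lemma disjoint_solution (R : realType) (X : Type) (d : X -> X -> R) n O
    (p : 'I_n -> X) k T : is_metric d -> feasible k T ->
  exists Ts, [/\ uniq (flatten Ts), forall i, i \in flatten Ts,
    forall t, t \in Ts -> (size t <= k)%N &
    \sum_(t <- Ts) tour_cost d O p t <= sol_cost d O p T].
Proof.
move=> d_metric [T_size T_cover]; exists (disjoint_tours [::] T); split.
- exact: (disjoint_tours_uniq T (seen := [::])).
- move=> i; have [t ht hi] := T_cover i.
  have : i \in flatten T by apply/flattenP; exists t.
  exact: (@disjoint_tours_cover _ T [::] i).
- exact: disjoint_tours_size.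
- exact: disjoint_tours_cost.
Qed.

Lemma singletons_feasible n k : (0 < k)%N -> feasible k [seq [:: i] | i <- enum 'I_n].
Proof.
move=> k_gt0; split; first by move=> t /mapP [i _ ->].
by move=> i; exists [:: i]; rewrite ?mem_head //; apply: map_f; rewrite mem_enum.
Qed.

(* If below every element of a nonempty set [S] of reals some member of a
   finite family satisfies [P] with [F] below it, then one does so below
   [inf S]: take one minimising [F]. *)
Lemma finite_choice_le_inf (R : realType) (I : finType) (P : pred I) (F : I -> R)
    (S : set R) : (exists c, S c) ->
  (forall c, S c -> exists2 i, P i & F i <= c) -> exists2 i, P i & F i <= inf S.
Proof.
move=> [c0 Sc0] hS; have [i0 Pi0 _] := hS c0 Sc0.
case: (arg_minP F Pi0) => i Pi F_min; exists i => //.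
rewrite leNgt; apply/negP => /(inf_lt (ex_intro _ c0 Sc0)) [c Sc hc].
have [j Pj hj] := hS c Sc.
by have := le_lt_trans (le_trans (F_min j Pj) hj) hc; rewrite ltxx.
Qed.

Lemma OPT_lower_bound (R : realType) (X : Type) (d : X -> X -> R) n O
    (p : 'I_n -> X) (lam eps : R) k :
  is_metric d -> 0 < lam -> 0 < eps -> lam + eps < 1 -> 16 / eps <= k%:R ->
  16 / eps <= (lam + 3 * eps / 4) * (lam + eps) * k%:R ->
  exists2 U : {set 'I_n}, (lam + 3 * eps / 4) * n%:R - 1 <= #|U|%:R &
    cvrp_rad d O p k + (1 - lam - eps) * \sum_(i in U) dist_set d p i (U :\ i)
      <= OPT d O p k.
Proof.
move=> d_metric lam0 eps0 lam_eps1 k_large k_large_al.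
have k_gt0 : (0 < k)%N by rewrite -(ltr0n R) (capacity_gt0 eps0 k_large).
apply: finite_choice_le_inf.
  exists (sol_cost d O p [seq [:: i] | i <- enum 'I_n]).
  by exists [seq [:: i] | i <- enum 'I_n]; split; first exact: singletons_feasible.
move=> _ [T [T_feasible ->]].
have [Ts [Ts_uniq Ts_cover Ts_size Ts_cost]] := disjoint_solution O p d_metric T_feasible.
have [U [U_card U_bound]] := charging_bound d_metric O p lam0 eps0 lam_eps1 k_large
  k_large_al Ts_uniq Ts_cover Ts_size.
by exists U => //; apply: le_trans Ts_cost.
Qed.

Lemma eventually_ge (R : archiFieldType) (k : nat -> nat) (B : R) :
  (forall m : nat, exists N : nat, forall n : nat, (N <= n)%N -> (m <= k n)%N) ->
  exists N : nat, forall n : nat, (N <= n)%N -> B <= (k n)%:R.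
Proof.
move=> k_unbounded; have [N hN] := k_unbounded (Num.truncn B).+1.
exists N => n /hN h; apply: ltW; apply: lt_le_trans (truncnS_gt B) _.
by rewrite ler_nat.
Qed.

Unset Implicit Arguments. Set Strict Implicit.

Theorem theorem10 (R : realType) (lam eps : R) (k : nat -> nat) :
  0 < lam -> 0 < eps -> lam + eps < 1 ->
  (forall m : nat, exists N : nat, forall n : nat, (N <= n)%N -> (m <= k n)%N) ->
  exists N : nat, forall n : nat, (N <= n)%N ->
    forall (X : Type) (d : X -> X -> R), is_metric d ->
    forall (O : X) (p : 'I_n -> X), injective p ->
    exists U : {set 'I_n},
      (lam + eps / 2) * n%:R < #|U|%:R /\
      cvrp_rad d O p (k n) + (1 - lam - eps) * \sum_(i in U) dist_set d p i (U :\ i)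
        <= OPT d O p (k n).
Proof.
move=> lam0 eps0 lam_eps1 k_unbounded.
pose c := (lam + 3 * eps / 4) * (lam + eps).
have c0 : 0 < c by rewrite mulr_gt0 //; lra.
have [N1 k_large] := eventually_ge (16 / eps + 16 / eps / c) k_unbounded.
have [N2 n_large] :=
  @eventually_ge R id (4 / eps + 1) (fun m => ex_intro _ m (fun n h => h)).
exists (maxn N1 N2) => n; rewrite geq_max => /andP [/k_large hk /n_large hn].
move=> X d d_metric O p _.
have h16 : 0 <= 16 / eps by rewrite divr_ge0 // ltW.
have h16c : 0 <= 16 / eps / c by rewrite divr_ge0 // ltW.
have hkc : 16 / eps <= c * (k n)%:R by rewrite -ler_pdivrMl //; lra.
have [|U U_card U_bound] := OPT_lower_bound O p d_metric lam0 eps0 lam_eps1 _ hkc.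
  by lra.
exists U; split => //; apply: lt_le_trans U_card.
have : 4 < n%:R * eps by rewrite -ltr_pdivrMr //; lra.
lra.
Qed.
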